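(* Let $\varphi(s,v)=\vec c(s)+v\vec q(s)$ be a developable timelike ruled surface of type $M^1_+$ in $\mathbb{R}^3_1$, and let $R$ be a nonzero constant. A developable spacelike ruled surface $\varphi^*$ of type $M^2_+$ with striction curve $\vec c^*=\vec c+R\vec a$ is a Mannheim offset of $\varphi$ if and only if $$\frac{d\kappa}{ds}=-\frac{1}{R}\left(R^2\kappa^2\left(\frac{ds_1}{ds}\right)^2+1\right)-\frac{1}{ds_1/ds}\frac{d^2s_1}{ds^2}\kappa .$$
   Context: Work in Minkowski 3-space $\mathbb{R}^3_1$ with $\langle x,y\rangle=-x_1y_1+x_2y_2+x_3y_3$, $\|x\|=\sqrt{|\langle x,x\rangle|}$, and Lorentzian cross product $x\times y=(x_2y_3-x_3y_2,\,x_1y_3-x_3y_1,\,x_2y_1-x_1y_2)$. A ruled surface is $\varphi(s,v)=\vec c(s)+v\vec q(s)$ with $\vec q$ a unit non-null vector field, $d\vec q/ds$ non-null, $\vec c$ the striction curve ($\langle d\vec q/ds,d\vec c/ds\rangle=0$) and $s$ the arc length of $\vec c$. Its Frenet frame $\{\vec q,\vec h,\vec a\}$ has central normal $\vec h=\frac{d\vec q/ds}{\|d\vec q/ds\|}$ and asymptotic normal $\vec a=\frac{(d\vec q/ds)\times\vec q}{\|d\vec q/ds\|}$. Type $M^1_+$: $\vec q$ and $\vec h$ spacelike (a timelike surface); type $M^2_+$: $\vec h$ timelike, $\vec q$ and $d\vec q/ds$ spacelike (a spacelike surface). Let $s_1$ be the arc length of the spherical image of $\vec q$ and $\kappa$ the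 conical curvature of the directing cone; for type $M^1_+$: $d\vec q/ds_1=\vec h$, $d\vec h/ds_1=-\vec q+\kappa\vec a$, $d\vec a/ds_1=\kappa\vec h$. A ruled surface is developable iff its distribution parameter $\det(d\vec c/ds,\vec q,d\vec q/ds)/\langle d\vec q/ds,d\vec q/ds\rangle$ vanishes identically. A ruled surface $\varphi^*(s,v)=\vec c^*(s)+v\vec q^*(s)$ with striction curve $\vec c^*$ and Frenet frame $\{\vec q^*,\vec h^*,\vec a^*\}$ is a Mannheim offset of $\varphi$ if its rulings correspond one-to-one with those of $\varphi$ and $\vec h^*=\vec a$. *)

From Stdlib Require Import Reals.
From Coquelicot Require Import Coquelicot.
Open Scope R_scope.

Record V3 : Type := mkV { x1 : R ; x2 : R ; x3 : R }.

Definition vadd (u v : V3) : V3 := mkV (x1 u + x1 v) (x2 u + x2 v) (x3 u + x3 v).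
Definition vscal (k : R) (u : V3) : V3 := mkV (k * x1 u) (k * x2 u) (k * x3 u).
Definition vopp (u : V3) : V3 := vscal (-1) u.

Definition lip (u v : V3) : R := - x1 u * x1 v + x2 u * x2 v + x3 u * x3 v.
Definition lnorm (u : V3) : R := sqrt (Rabs (lip u u)).
Definition lcross (u v : V3) : V3 :=
  mkV (x2 u * x3 v - x3 u * x2 v)
      (x1 u * x3 v - x3 u * x1 v)
      (x2 u * x1 v - x1 u * x2 v).
Definition det3 (u v w : V3) : R :=
  x1 u * (x2 v * x3 w - x3 v * x2 w)
  - x2 u * (x1 v * x3 w - x3 v * x1 w)
  + x3 u * (x1 v * x2 w - x2 v * x1 w).

Definition spacelike (u : V3) : Prop := lip u u > 0.
Definition timelike (u : V3) : Prop := lip u u < 0.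

Definition dV (f : R -> V3) (s : R) : V3 :=
  mkV (Derive (fun t => x1 (f t)) s)
      (Derive (fun t => x2 (f t)) s)
      (Derive (fun t => x3 (f t)) s).
Definition diffV (f : R -> V3) (s : R) : Prop :=
  ex_derive (fun t => x1 (f t)) s /\
  ex_derive (fun t => x2 (f t)) s /\
  ex_derive (fun t => x3 (f t)) s.

Definition inI (a0 b0 : Rbar) (s : R) : Prop :=
  Rbar_lt a0 (Finite s) /\ Rbar_lt (Finite s) b0.

(** Frenet frame {q, h, a} of the ruled surface c(s) + v q(s) *)
Definition hvec (q : R -> V3) (s : R) : V3 :=
  vscal (/ lnorm (dV q s)) (dV q s).
Definition avec (q : R -> V3) (s : R) : V3 :=
  vscal (/ lnorm (dV q s)) (lcross (dV q s) (q s)).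

(** Ruled surface phi(s,v) = c(s) + v q(s) at the parameter value s:
    q unit non-null, dq/ds non-null, c the striction curve. *)
Definition ruled_surface_at (c q : R -> V3) (s : R) : Prop :=
  diffV c s /\ diffV q s /\
  Rabs (lip (q s) (q s)) = 1 /\
  lip (dV q s) (dV q s) <> 0 /\
  lip (dV q s) (dV c s) = 0.

Definition arclength_at (c : R -> V3) (s : R) : Prop :=
  Rabs (lip (dV c s) (dV c s)) = 1.

Definition distribution_parameter (c q : R -> V3) (s : R) : R :=
  det3 (dV c s) (q s) (dV q s) / lip (dV q s) (dV q s).

(** types: M^1_+ (q, h spacelike; timelike surface),
           M^2_+ (q spacelike, h timelike; spacelike surface) *)
Definition typeM1p (q : R -> V3) (s : R) : Prop :=
  spacelike (q s) /\ spacelike (hvec q s).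
Definition typeM2p (q : R -> V3) (s : R) : Prop :=
  spacelike (q s) /\ timelike (hvec q s).

(** s1 = arc length of the spherical image of q (ds1/ds = ||dq/ds||),
    kappa = conical curvature, defined by the Frenet formula
    dh/ds1 = -q + kappa a, i.e. dh/ds = (ds1/ds) (-q + kappa a). *)
Definition conical_data_at (q : R -> V3) (s1 kappa : R -> R) (s : R) : Prop :=
  ex_derive s1 s /\ Derive s1 s = lnorm (dV q s) /\
  diffV (hvec q) s /\
  dV (hvec q) s =
    vscal (Derive s1 s) (vadd (vopp (q s)) (vscal (kappa s) (avec q s))).

(** Mannheim offset: phi*(s,v) = c*(s) + v q*(s) (rulings correspond through
    the common parameter s) with h* = a.  As the ruled surface phi* does not
    depend on the orientation of its ruling direction (q* and -q* give the
    same surface), we allow either orientation of q*. *)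
Definition mannheim_offset_on (a0 b0 : Rbar) (q qs : R -> V3) : Prop :=
  exists sg : R, (sg = 1 \/ sg = -1) /\
    forall s, inI a0 b0 s ->
      hvec (fun t => vscal sg (qs t)) s = avec q s.

From Stdlib Require Import Reals Lra Psatz Ranalysis5 Classical.
From Coquelicot Require Import Coquelicot.
Open Scope R_scope.

(* By the Frenet formulas of phi (a' = s1' kappa h) the offset curve
   c* = c + R a has velocity c*' = q + R s1' kappa h.  Since phi* is developable
   with striction curve c*, c*' = alpha q* with alpha <> 0, hence
   c*'' = alpha' q* + alpha q*'.  Expanding c*'' in the frame {q, h, a} and using
   the striction condition <q*', c*'> = 0, q*' has no q- and h-components (i.e.
   h* = +-a) exactly when the h-component s1' + R (s1'' kappa + s1' kappa') of c*''
   equals -R^2 s1'^3 kappa^2, which is the stated equation; q*' is then a multiple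
   of a.  One orientation of q* works on the whole interval because alpha, being
   continuous and nonzero, keeps its sign. *)

Lemma V3_ext (u v : V3) : x1 u = x1 v -> x2 u = x2 v -> x3 u = x3 v -> u = v.
Proof. destruct u, v; simpl; intros; subst; reflexivity. Qed.

Ltac vec_ring := apply V3_ext; unfold vopp, vadd, vscal, lcross, lip, det3; simpl; ring.

Lemma lip_comm u v : lip u v = lip v u.
Proof. unfold lip; ring. Qed.
Lemma lip_addl u v w : lip (vadd u v) w = lip u w + lip v w.
Proof. unfold lip, vadd; simpl; ring. Qed.
Lemma lip_addr u v w : lip w (vadd u v) = lip w u + lip w v.
Proof. unfold lip, vadd; simpl; ring. Qed.
Lemma lip_scall k u w : lip (vscal k u) w = k * lip u w.
Proof. unfold lip, vscal; simpl; ring. Qed.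
Lemma lip_scalr k u w : lip w (vscal k u) = k * lip w u.
Proof. unfold lip, vscal; simpl; ring. Qed.
Lemma lip_oppl u w : lip (vopp u) w = - lip u w.
Proof. unfold lip, vopp, vscal; simpl; ring. Qed.

Lemma lip_lcrossl u v : lip (lcross u v) u = 0.
Proof. unfold lip, lcross; simpl; ring. Qed.
Lemma lip_lcrossr u v : lip (lcross u v) v = 0.
Proof. unfold lip, lcross; simpl; ring. Qed.
Lemma lip_lcross_self u v :
  lip (lcross u v) (lcross u v) = lip u v ^ 2 - lip u u * lip v v.
Proof. unfold lip, lcross; simpl; ring. Qed.
Lemma lcross_lcrossl u v w :
  lcross (lcross u v) w = vadd (vscal (lip v w) u) (vscal (- lip u w) v).
Proof. vec_ring. Qed.
(* Cramer's rule for the Lorentzian product: the Euclidean cross product is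
   [- J (lcross v w)] with [J = diag(-1,1,1)]. *)
Lemma det3_scal z u v w :
  vscal (det3 u v w) z =
  vopp (vadd (vadd (vscal (lip z u) (lcross v w)) (vscal (lip z v) (lcross w u)))
             (vscal (lip z w) (lcross u v))).
Proof. vec_ring. Qed.

Lemma lip_eq0_det3 z u v w :
  det3 u v w <> 0 -> lip z u = 0 -> lip z v = 0 -> lip z w = 0 -> z = mkV 0 0 0.
Proof.
  intros hd hu hv hw.
  pose proof (det3_scal z u v w) as E. rewrite hu, hv, hw in E.
  assert (C : forall a, det3 u v w * a = 0 -> a = 0).
  { intros a ha. destruct (Rmult_integral _ _ ha); [contradiction | assumption]. }
  destruct z as [z1 z2 z3]; unfold vscal, vopp, vadd in E; simpl in E.
  injection E; intros e3 e2 e1.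
  apply V3_ext; simpl; apply C; lra.
Qed.

Definition lorentz_frame (Q H A : V3) : Prop :=
  lip Q Q = 1 /\ lip H H = 1 /\ lip A A = -1 /\
  lip Q H = 0 /\ lip Q A = 0 /\ lip H A = 0.

Lemma lnorm_scal k u : lnorm (vscal k u) = Rabs k * lnorm u.
Proof.
  unfold lnorm. rewrite lip_scall, lip_scalr, <- Rmult_assoc, !Rabs_mult.
  rewrite sqrt_mult_alt, sqrt_square by (auto using Rabs_pos, Rmult_le_pos).
  reflexivity.
Qed.

Lemma inI_locally a0 b0 s : inI a0 b0 s -> locally s (inI a0 b0).
Proof.
  apply (locally_open (fun u : R => Rbar_lt a0 (Finite u) /\ Rbar_lt (Finite u) b0)).
  - apply open_and; [apply open_Rbar_gt | apply open_Rbar_lt].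
  - intros x Hx; exact Hx.
Qed.

Lemma inI_between a0 b0 x y z :
  inI a0 b0 x -> inI a0 b0 y -> x <= z <= y -> inI a0 b0 z.
Proof.
  intros [hx _] [_ hy] [h1 h2]. split.
  - apply Rbar_lt_le_trans with (Finite x); [exact hx | exact h1].
  - apply Rbar_le_lt_trans with (Finite y); [exact h2 | exact hy].
Qed.

Lemma inI_sign_const a0 b0 (f : R -> R) s0 :
  (forall s, inI a0 b0 s -> continuity_pt f s) ->
  (forall s, inI a0 b0 s -> f s <> 0) ->
  inI a0 b0 s0 -> 0 < f s0 -> forall s, inI a0 b0 s -> 0 < f s.
Proof.
  intros fc f0 Hs0 fs0 s Hs.
  destruct (Rlt_or_le 0 (f s)) as [h | h]; [exact h | exfalso].
  assert (fneg : f s < 0) by (pose proof (f0 s Hs); lra).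
  destruct (Rtotal_order s s0) as [lt | [-> | gt]]; [| lra |].
  - destruct (IVT_interv f s s0) as [z [hz fz]]; auto.
    + intros a ha. apply fc, (inI_between _ _ _ _ _ Hs Hs0 ha).
    + apply (f0 z); auto. apply (inI_between _ _ _ _ _ Hs Hs0 hz).
  - destruct (IVT_interv (fun t => - f t) s0 s) as [z [hz fz]]; auto; try lra.
    + intros a ha. apply continuity_pt_opp, fc, (inI_between _ _ _ _ _ Hs0 Hs ha).
    + apply (f0 z). apply (inI_between _ _ _ _ _ Hs0 Hs hz). lra.
Qed.

Lemma dV_ext_loc (f g : R -> V3) s :
  locally s (fun t => f t = g t) -> dV f s = dV g s.
Proof.
  intros H. unfold dV. f_equal; apply Derive_ext_loc;
    apply (filter_imp _ _ (fun t e => f_equal _ e) H).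
Qed.

Lemma diffV_ext_loc (f g : R -> V3) s :
  locally s (fun t => f t = g t) -> diffV f s -> diffV g s.
Proof.
  intros H (h1 & h2 & h3). repeat split.
  - apply (ex_derive_ext_loc _ _ _ (filter_imp _ _ (fun t e => f_equal x1 e) H) h1).
  - apply (ex_derive_ext_loc _ _ _ (filter_imp _ _ (fun t e => f_equal x2 e) H) h2).
  - apply (ex_derive_ext_loc _ _ _ (filter_imp _ _ (fun t e => f_equal x3 e) H) h3).
Qed.

Ltac solve_ex_derive :=
  repeat match goal with
  | |- ex_derive (fun t => @?a t + @?b t) _ => apply (ex_derive_plus a b)
  | |- ex_derive (fun t => @?a t - @?b t) _ => apply (ex_derive_minus a b)
  | |- ex_derive (fun t => - @?a t) _ => apply (ex_derive_opp a)
  | |- ex_derive (fun t => @?a t * @?b t) _ => apply (ex_derive_mult a b)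
  end; try assumption.

Lemma diffV_vadd (f g : R -> V3) s : diffV f s -> diffV g s ->
  diffV (fun t => vadd (f t) (g t)) s.
Proof. intros (? & ? & ?) (? & ? & ?); repeat split; simpl; solve_ex_derive. Qed.

Lemma dV_vadd (f g : R -> V3) s : diffV f s -> diffV g s ->
  dV (fun t => vadd (f t) (g t)) s = vadd (dV f s) (dV g s).
Proof.
  intros (? & ? & ?) (? & ? & ?). unfold dV, vadd; simpl.
  f_equal; apply Derive_plus; assumption.
Qed.

Lemma diffV_vscal (k : R -> R) (f : R -> V3) s : ex_derive k s -> diffV f s ->
  diffV (fun t => vscal (k t) (f t)) s.
Proof. intros ? (? & ? & ?); repeat split; simpl; solve_ex_derive. Qed.

Lemma dV_vscal (k : R -> R) (f : R -> V3) s : ex_derive k s -> diffV f s ->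
  dV (fun t => vscal (k t) (f t)) s =
  vadd (vscal (Derive k s) (f s)) (vscal (k s) (dV f s)).
Proof.
  intros ? (? & ? & ?). unfold dV, vadd, vscal; simpl.
  f_equal; apply Derive_mult; assumption.
Qed.

Lemma dV_cscal (k : R) (f : R -> V3) s :
  dV (fun t => vscal k (f t)) s = vscal k (dV f s).
Proof. unfold dV, vscal; simpl. f_equal; apply Derive_scal. Qed.

Lemma diffV_lcross (f g : R -> V3) s : diffV f s -> diffV g s ->
  diffV (fun t => lcross (f t) (g t)) s.
Proof. intros (? & ? & ?) (? & ? & ?); repeat split; simpl; solve_ex_derive. Qed.

Lemma dV_lcross (f g : R -> V3) s : diffV f s -> diffV g s ->
  dV (fun t => lcross (f t) (g t)) s =
  vadd (lcross (dV f s) (g s)) (lcross (f s) (dV g s)).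
Proof.
  intros (? & ? & ?) (? & ? & ?). unfold lcross, dV, vadd; simpl.
  f_equal; rewrite Derive_minus by solve_ex_derive;
    rewrite !Derive_mult by assumption; ring.
Qed.

Lemma ex_derive_lip (f g : R -> V3) s : diffV f s -> diffV g s ->
  ex_derive (fun t => lip (f t) (g t)) s.
Proof. intros (? & ? & ?) (? & ? & ?); unfold lip; solve_ex_derive. Qed.

Lemma Derive_lip (f g : R -> V3) s : diffV f s -> diffV g s ->
  Derive (fun t => lip (f t) (g t)) s = lip (dV f s) (g s) + lip (f s) (dV g s).
Proof.
  intros (? & ? & ?) (? & ? & ?). unfold lip, dV; simpl.
  rewrite !Derive_plus by solve_ex_derive.
  rewrite !Derive_mult, Derive_opp by solve_ex_derive. ring.
Qed.

(* [Q, H, A] stands for the frame [q, h, a] of phi, [P] for q*, [al P] for c*'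
   and [dal P + al dP] for c*''; [hstrict] is the striction condition of phi*. *)
Section FrameAlgebra.

Variables (Q H A P dP : V3) (al dal r u X v : R).
Hypotheses (frame : lorentz_frame Q H A)
  (hP : vscal al P = vadd Q (vscal r H))
  (hdP : vadd (vscal dal P) (vscal al dP) =
         vadd (vadd (vscal u Q) (vscal X H)) (vscal v A))
  (hstrict : lip dP (vadd Q (vscal r H)) = 0).

Lemma frame_scal_neq0 : al <> 0.
Proof.
  intros al0. destruct frame as (QQ & _ & _ & QH & _).
  assert (E : lip (vscal al P) Q = lip (vadd Q (vscal r H)) Q) by (rewrite hP; reflexivity).
  rewrite lip_scall, lip_addl, lip_scall, (lip_comm H Q), QQ, QH, al0 in E. lra.
Qed.

(* [dal P = (dal / al) (al P)] eliminates [P]. *)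
Lemma frame_scal_dP :
  vscal al dP = vadd (vadd (vscal (u - dal / al) Q) (vscal (X - dal / al * r) H)) (vscal v A).
Proof.
  pose proof frame_scal_neq0 as al0.
  assert (E : vscal dal P = vscal (dal / al) (vadd Q (vscal r H))).
  { rewrite <- hP. apply V3_ext; simpl; field; exact al0. }
  pose proof (f_equal x1 hdP); pose proof (f_equal x2 hdP); pose proof (f_equal x3 hdP).
  pose proof (f_equal x1 E); pose proof (f_equal x2 E); pose proof (f_equal x3 E).
  simpl in *. apply V3_ext; simpl; lra.
Qed.

Lemma frame_dP_coords :
  al * lip dP Q = u - dal / al /\ al * lip dP H = X - dal / al * r /\
  (u - dal / al) + r * (X - dal / al * r) = 0.
Proof.
  destruct frame as (QQ & HH & _ & QH & QA & HA).
  assert (C : forall w, al * lip dP w = lip (vadd (vadd (vscal (u - dal / al) Q)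
                (vscal (X - dal / al * r) H)) (vscal v A)) w).
  { intros w. rewrite <- frame_scal_dP, lip_scall. reflexivity. }
  assert (cQ : al * lip dP Q = u - dal / al).
  { rewrite C, !lip_addl, !lip_scall, (lip_comm H Q), (lip_comm A Q), QQ, QH, QA. ring. }
  assert (cH : al * lip dP H = X - dal / al * r).
  { rewrite C, !lip_addl, !lip_scall, (lip_comm A H), QH, HH, HA. ring. }
  repeat split; try assumption.
  rewrite <- cQ, <- cH.
  transitivity (al * lip dP (vadd Q (vscal r H))).
  - rewrite lip_addr, lip_scalr. ring.
  - rewrite hstrict. ring.
Qed.

Lemma frame_dP_orth_iff : lip dP Q = 0 /\ lip dP H = 0 <-> X = u * r.
Proof.
  pose proof frame_scal_neq0 as al0.
  destruct frame_dP_coords as (cQ & cH & cW). set (lam := dal / al) in *.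
  split.
  - intros [hQ hH]. rewrite hQ in cQ. rewrite hH in cH.
    assert (lam = u) by lra. subst lam. nra.
  - intros hX. rewrite hX in cW.
    assert (Hl : (u - lam) * (1 + r ^ 2) = 0) by (rewrite <- cW; ring).
    assert (lam = u).
    { destruct (Rmult_integral _ _ Hl) as [h | h]; [lra | nra]. }
    split; apply (Rmult_eq_reg_l al); try exact al0; nra.
Qed.

Lemma frame_dP_parallel : X = u * r -> vscal al dP = vscal v A.
Proof.
  intros hX. pose proof frame_scal_neq0 as al0.
  destruct frame_dP_coords as (cQ & cH & cW).
  apply frame_dP_orth_iff in hX as [hQ hH].
  rewrite hQ in cQ. rewrite hH in cH.
  rewrite frame_scal_dP, <- cQ, <- cH. vec_ring.
Qed.

End FrameAlgebra.

Lemma conical_equation_iff (Rc N dN K dK : R) : Rc <> 0 -> N <> 0 ->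
  (dK = - / Rc * (Rc ^ 2 * K ^ 2 * N ^ 2 + 1) - / N * dN * K <->
   N + Rc * (dN * K + N * dK) = - (Rc * N ^ 2 * K) * (Rc * N * K)).
Proof.
  intros Rc0 N0. split; intros h.
  - rewrite h. field. split; assumption.
  - apply (Rmult_eq_reg_l (Rc * N)); [| apply Rmult_integral_contrapositive; split; assumption].
    replace (Rc * N * dK) with (- (Rc * N ^ 2 * K) * (Rc * N * K) - N - Rc * dN * K)
      by (rewrite <- h; ring).
    field. split; assumption.
Qed.

Lemma avec_lcross (q : R -> V3) t : avec q t = lcross (hvec q t) (q t).
Proof. unfold avec, hvec. vec_ring. Qed.

Lemma spacelike_vscal k u : spacelike (vscal k u) -> spacelike u.
Proof. unfold spacelike. rewrite lip_scall, lip_scalr. nra. Qed.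

Lemma timelike_vscal k u : timelike (vscal k u) -> timelike u.
Proof. unfold timelike. rewrite lip_scall, lip_scalr. nra. Qed.

Lemma lnorm_spacelike u : spacelike u -> 0 < lnorm u /\ lnorm u ^ 2 = lip u u.
Proof.
  unfold spacelike, lnorm. intros hu. rewrite Rabs_pos_eq by lra.
  split; [apply sqrt_lt_R0; exact hu | rewrite <- Rsqr_pow2; apply Rsqr_sqrt; lra].
Qed.

Lemma hvec_eq_of_dV (f : R -> V3) s m u :
  0 < m -> lip u u = -1 -> dV f s = vscal m u -> hvec f s = u.
Proof.
  intros hm hu E. unfold hvec. rewrite E, lnorm_scal, Rabs_pos_eq by lra.
  assert (hn : Rabs (lip u u) = 1) by (rewrite hu, Rabs_left; lra).
  assert (lnorm u = 1) as -> by (unfold lnorm; rewrite hn; apply sqrt_1).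
  apply V3_ext; simpl; field; lra.
Qed.

Lemma lip_dV_eq0_of_hvec (f : R -> V3) s w :
  lip (hvec f s) (hvec f s) <> 0 -> lip (hvec f s) w = 0 -> lip (dV f s) w = 0.
Proof.
  unfold hvec. rewrite !lip_scall, lip_scalr. intros hh hw.
  destruct (Rmult_integral _ _ hw) as [k0 | ]; [| assumption].
  exfalso. apply hh. rewrite k0. ring.
Qed.

(* Along a developable ruled surface, the striction curve is tangent to the rulings. *)
Lemma striction_tangent_ruling W P dP :
  lip P P = 1 -> lip P dP = 0 -> lip dP dP <> 0 -> lip dP W = 0 ->
  det3 W P dP = 0 -> W = vscal (lip W P) P.
Proof.
  intros PP PdP dPdP dPW hdet.
  assert (Z : vadd W (vopp (vscal (lip W P) P)) = mkV 0 0 0).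
  { apply (lip_eq0_det3 _ P dP (lcross P dP)).
    - intros h. assert (E : det3 P dP (lcross P dP) = lip dP dP * lip P P - lip P dP ^ 2)
        by (unfold det3, lcross, lip; simpl; ring).
      rewrite E, PP, PdP in h. apply dPdP. lra.
    - rewrite lip_addl, lip_oppl, lip_scall, PP. ring.
    - rewrite lip_addl, lip_oppl, lip_scall, PdP, lip_comm, dPW. ring.
    - transitivity (- det3 W P dP); [unfold det3, lip, lcross, vopp, vadd, vscal; simpl; ring |].
      rewrite hdet. ring. }
  destruct W; injection Z; intros; apply V3_ext; simpl in *; lra.
Qed.

Definition offset_curve (c q : R -> V3) (Rc : R) : R -> V3 :=
  fun t => vadd (c t) (vscal Rc (avec q t)).

Definition conical_equation (s1 kappa : R -> R) (Rc s : R) : Prop :=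
  Derive kappa s =
    - (/ Rc) * (Rc ^ 2 * (kappa s) ^ 2 * (Derive s1 s) ^ 2 + 1)
    - (/ Derive s1 s) * Derive (Derive s1) s * kappa s.

Definition striction_speed (cs qs : R -> V3) (t : R) : R := lip (dV cs t) (qs t).

Section BaseSurface.

Variables (a0 b0 : Rbar) (c q : R -> V3) (s1 kappa : R -> R) (Rc : R).
Hypothesis base : forall s, inI a0 b0 s ->
  ruled_surface_at c q s /\ arclength_at c s /\ dV c s = q s /\ diffV (dV q) s /\
  typeM1p q s /\ distribution_parameter c q s = 0 /\
  conical_data_at q s1 kappa s /\ ex_derive kappa s.

Section Pointwise.

Variable s : R.
Hypothesis Hs : inI a0 b0 s.

Lemma base_unit_ruling : lip (q s) (q s) = 1.
Proof.
  destruct (base s Hs) as ((_ & _ & qq & _) & _ & _ & _ & (qsp & _) & _).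
  unfold spacelike in qsp. rewrite Rabs_pos_eq in qq; lra.
Qed.

Lemma base_dq_spacelike : spacelike (dV q s).
Proof.
  destruct (base s Hs) as (_ & _ & _ & _ & (_ & hsp) & _).
  exact (spacelike_vscal _ _ hsp).
Qed.

Lemma base_dq_eq : dV q s = vscal (lnorm (dV q s)) (hvec q s).
Proof.
  destruct (lnorm_spacelike _ base_dq_spacelike) as [N0 _].
  unfold hvec. apply V3_ext; simpl; field; lra.
Qed.

Lemma base_frame : lorentz_frame (q s) (hvec q s) (avec q s).
Proof.
  destruct (base s Hs) as ((_ & _ & _ & _ & strict) & _ & dc & _).
  destruct (lnorm_spacelike _ base_dq_spacelike) as [N0 N2].
  pose proof base_unit_ruling as QQ.
  assert (HH : lip (hvec q s) (hvec q s) = 1).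
  { unfold hvec. rewrite lip_scall, lip_scalr, <- N2. field. lra. }
  assert (QH : lip (q s) (hvec q s) = 0).
  { rewrite dc in strict. unfold hvec. rewrite lip_scalr, lip_comm, strict. ring. }
  rewrite avec_lcross. repeat split; try assumption.
  - rewrite lip_lcross_self, lip_comm, QH, HH, QQ. ring.
  - rewrite lip_comm. apply lip_lcrossr.
  - rewrite lip_comm. apply lip_lcrossl.
Qed.

Lemma base_dh_eq :
  dV (hvec q) s = vscal (lnorm (dV q s)) (vadd (vopp (q s)) (vscal (kappa s) (avec q s))).
Proof.
  destruct (base s Hs) as (_ & _ & _ & _ & _ & _ & (_ & ds1 & _ & dh) & _).
  rewrite dh, ds1. reflexivity.
Qed.

Lemma base_diffV_avec : diffV (avec q) s.
Proof.
  destruct (base s Hs) as ((_ & dq & _) & _ & _ & _ & _ & _ & (_ & _ & dh & _) & _).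
  apply (diffV_ext_loc (fun t => lcross (hvec q t) (q t))).
  - apply filter_forall. intros t. symmetry. apply avec_lcross.
  - apply diffV_lcross; assumption.
Qed.

Lemma base_da_eq : dV (avec q) s = vscal (lnorm (dV q s) * kappa s) (hvec q s).
Proof.
  destruct (base s Hs) as ((_ & dq & _) & _ & _ & _ & _ & _ & (_ & _ & dh & _) & _).
  destruct base_frame as (QQ & _ & _ & QH & _).
  rewrite (dV_ext_loc _ (fun t => lcross (hvec q t) (q t)))
    by (apply filter_forall; intros t; apply avec_lcross).
  rewrite dV_lcross, base_dh_eq, avec_lcross by assumption.
  pose proof base_dq_eq as DQ.
  set (N := lnorm (dV q s)) in *. set (H := hvec q s) in *. rewrite DQ.
  transitivity (vscal (N * kappa s) (lcross (lcross H (q s)) (q s))).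
  - vec_ring.
  - rewrite lcross_lcrossl, QQ, (lip_comm H), QH. vec_ring.
Qed.

End Pointwise.

Lemma base_ex_derive_lnorm_dq s : inI a0 b0 s -> ex_derive (fun t => lnorm (dV q t)) s.
Proof.
  intros Hs.
  apply (ex_derive_ext_loc (fun t => lip (dV q t) (hvec q t))).
  - apply (filter_imp (inI a0 b0)); [| exact (inI_locally _ _ _ Hs)].
    intros t Ht. destruct (base_frame t Ht) as (_ & HH & _).
    rewrite (base_dq_eq t Ht) at 1. rewrite lip_scall, HH. apply Rmult_1_r.
  - destruct (base s Hs) as (_ & _ & _ & ddq & _ & _ & (_ & _ & dh & _) & _).
    apply ex_derive_lip; assumption.
Qed.

Lemma base_Derive2_s1 s : inI a0 b0 s ->
  Derive (Derive s1) s = Derive (fun t => lnorm (dV q t)) s.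
Proof.
  intros Hs. apply Derive_ext_loc.
  apply (filter_imp (inI a0 b0)); [| exact (inI_locally _ _ _ Hs)].
  intros t Ht. destruct (base t Ht) as (_ & _ & _ & _ & _ & _ & (_ & ds1 & _) & _).
  exact ds1.
Qed.

Lemma offset_curve_dV s : inI a0 b0 s ->
  dV (offset_curve c q Rc) s =
  vadd (q s) (vscal (Rc * lnorm (dV q s) * kappa s) (hvec q s)).
Proof.
  intros Hs. destruct (base s Hs) as ((dc & _) & _ & dcq & _).
  assert (da : diffV (fun t => vscal Rc (avec q t)) s).
  { apply (diffV_vscal (fun _ => Rc)); [apply ex_derive_const | exact (base_diffV_avec s Hs)]. }
  unfold offset_curve. rewrite dV_vadd by assumption.
  rewrite dV_cscal, (base_da_eq s Hs), dcq. vec_ring.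
Qed.

Lemma offset_curve_dV_loc s : inI a0 b0 s ->
  locally s (fun t => vadd (q t) (vscal (Rc * lnorm (dV q t) * kappa t) (hvec q t)) =
                      dV (offset_curve c q Rc) t).
Proof.
  intros Hs. apply (filter_imp (inI a0 b0)); [| exact (inI_locally _ _ _ Hs)].
  intros t Ht. symmetry. exact (offset_curve_dV t Ht).
Qed.

Lemma ex_derive_offset_coef s : inI a0 b0 s ->
  ex_derive (fun t => Rc * lnorm (dV q t) * kappa t) s.
Proof.
  intros Hs. destruct (base s Hs) as (_ & _ & _ & _ & _ & _ & _ & dk).
  apply ex_derive_mult; [apply ex_derive_scal, base_ex_derive_lnorm_dq |]; assumption.
Qed.

Lemma offset_curve_diffV2 s : inI a0 b0 s -> diffV (dV (offset_curve c q Rc)) s.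
Proof.
  intros Hs.
  destruct (base s Hs) as ((_ & dq & _) & _ & _ & _ & _ & _ & (_ & _ & dh & _) & _).
  apply (diffV_ext_loc _ _ _ (offset_curve_dV_loc s Hs)).
  apply diffV_vadd, diffV_vscal; auto using ex_derive_offset_coef.
Qed.

Lemma offset_curve_dV2 s : inI a0 b0 s ->
  dV (dV (offset_curve c q Rc)) s =
  vadd (vadd (vscal (- (Rc * lnorm (dV q s) ^ 2 * kappa s)) (q s))
             (vscal (lnorm (dV q s) + Rc * (Derive (fun t => lnorm (dV q t)) s * kappa s
                                            + lnorm (dV q s) * Derive kappa s)) (hvec q s)))
       (vscal (Rc * lnorm (dV q s) ^ 2 * kappa s ^ 2) (avec q s)).
Proof.
  intros Hs. pose proof (base_ex_derive_lnorm_dq s Hs).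
  destruct (base s Hs) as ((_ & dq & _) & _ & _ & _ & _ & _ & (_ & _ & dh & _) & dk).
  rewrite <- (dV_ext_loc _ _ _ (offset_curve_dV_loc s Hs)).
  rewrite dV_vadd, dV_vscal; auto using diffV_vscal, ex_derive_offset_coef.
  rewrite Derive_mult, Derive_scal by auto using ex_derive_scal.
  rewrite (base_dh_eq s Hs).
  pose proof (base_dq_eq s Hs) as DQ. set (N := lnorm (dV q s)) in *. rewrite DQ.
  vec_ring.
Qed.

Section Offset.

Variable qs : R -> V3.
Hypothesis Rc0 : Rc <> 0.
Hypothesis offset : forall s, inI a0 b0 s ->
  ruled_surface_at (offset_curve c q Rc) qs s /\ typeM2p qs s /\
  distribution_parameter (offset_curve c q Rc) qs s = 0.

Lemma offset_unit_ruling s : inI a0 b0 s -> lip (qs s) (qs s) = 1.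
Proof.
  intros Hs. destruct (offset s Hs) as ((_ & _ & pp & _) & (psp & _) & _).
  unfold spacelike in psp. rewrite Rabs_pos_eq in pp; lra.
Qed.

Lemma offset_ruling_dq_orth s : inI a0 b0 s -> lip (qs s) (dV qs s) = 0.
Proof.
  intros Hs. destruct (offset s Hs) as ((_ & dqs & _) & _).
  assert (D : Derive (fun t => lip (qs t) (qs t)) s = Derive (fun _ => 1) s).
  { apply Derive_ext_loc. apply (filter_imp (inI a0 b0)); [| exact (inI_locally _ _ _ Hs)].
    exact offset_unit_ruling. }
  rewrite Derive_lip, Derive_const, (lip_comm (dV qs s)) in D by assumption. lra.
Qed.

Lemma offset_dq_timelike s : inI a0 b0 s -> timelike (dV qs s).
Proof.
  intros Hs. destruct (offset s Hs) as (_ & (_ & htm) & _).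
  exact (timelike_vscal _ _ htm).
Qed.

Local Notation al := (striction_speed (offset_curve c q Rc) qs).

Lemma offset_curve_dV_ruling s : inI a0 b0 s ->
  dV (offset_curve c q Rc) s = vscal (al s) (qs s).
Proof.
  intros Hs. pose proof (offset_dq_timelike s Hs) as tl. unfold timelike in tl.
  destruct (offset s Hs) as ((_ & _ & _ & _ & strict) & _ & dp).
  apply (striction_tangent_ruling _ _ (dV qs s));
    auto using offset_unit_ruling, offset_ruling_dq_orth; try lra.
  unfold distribution_parameter in dp.
  destruct (Rmult_integral _ _ dp) as [h | h]; [exact h |].
  exfalso. revert h. apply Rinv_neq_0_compat. lra.
Qed.

Lemma ex_derive_striction_speed s : inI a0 b0 s -> ex_derive al s.
Proof.
  intros Hs. destruct (offset s Hs) as ((_ & dqs & _) & _).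
  apply ex_derive_lip; [apply offset_curve_diffV2 |]; assumption.
Qed.

Lemma offset_curve_dV2_ruling s : inI a0 b0 s ->
  dV (dV (offset_curve c q Rc)) s =
  vadd (vscal (Derive al s) (qs s)) (vscal (al s) (dV qs s)).
Proof.
  intros Hs. destruct (offset s Hs) as ((_ & dqs & _) & _).
  rewrite <- dV_vscal by auto using ex_derive_striction_speed.
  apply dV_ext_loc. apply (filter_imp (inI a0 b0)); [| exact (inI_locally _ _ _ Hs)].
  exact offset_curve_dV_ruling.
Qed.

Lemma offset_frame_relations s : inI a0 b0 s ->
  vscal (al s) (qs s) = vadd (q s) (vscal (Rc * lnorm (dV q s) * kappa s) (hvec q s)) /\
  vadd (vscal (Derive al s) (qs s)) (vscal (al s) (dV qs s)) =
  vadd (vadd (vscal (- (Rc * lnorm (dV q s) ^ 2 * kappa s)) (q s))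
             (vscal (lnorm (dV q s) + Rc * (Derive (fun t => lnorm (dV q t)) s * kappa s
                                            + lnorm (dV q s) * Derive kappa s)) (hvec q s)))
       (vscal (Rc * lnorm (dV q s) ^ 2 * kappa s ^ 2) (avec q s)) /\
  lip (dV qs s) (vadd (q s) (vscal (Rc * lnorm (dV q s) * kappa s) (hvec q s))) = 0.
Proof.
  intros Hs. destruct (offset s Hs) as ((_ & _ & _ & _ & strict) & _).
  rewrite <- offset_curve_dV_ruling, <- offset_curve_dV2_ruling, <- offset_curve_dV,
    <- offset_curve_dV2 by exact Hs.
  auto.
Qed.

Lemma striction_speed_neq0 s : inI a0 b0 s -> al s <> 0.
Proof.
  intros Hs. destruct (offset_frame_relations s Hs) as (hP & hdP & hW).
  exact (frame_scal_neq0 _ _ _ _ _ _ (base_frame s Hs) hP).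
Qed.

Lemma offset_dq_orth_iff s : inI a0 b0 s ->
  lip (dV qs s) (q s) = 0 /\ lip (dV qs s) (hvec q s) = 0 <->
  conical_equation s1 kappa Rc s.
Proof.
  intros Hs. destruct (offset_frame_relations s Hs) as (hP & hdP & hW).
  destruct (base s Hs) as (_ & _ & _ & _ & _ & _ & (_ & ds1 & _) & _).
  destruct (lnorm_spacelike _ (base_dq_spacelike s Hs)) as [N0 _].
  unfold conical_equation. rewrite ds1, base_Derive2_s1, conical_equation_iff by (auto; lra).
  exact (frame_dP_orth_iff _ _ _ _ _ _ _ _ _ _ _ (base_frame s Hs) hP hdP hW).
Qed.

Lemma offset_dq_along_avec s : inI a0 b0 s -> conical_equation s1 kappa Rc s ->
  vscal (al s) (dV qs s) = vscal (Rc * lnorm (dV q s) ^ 2 * kappa s ^ 2) (avec q s).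
Proof.
  intros Hs E. destruct (offset_frame_relations s Hs) as (hP & hdP & hW).
  apply (frame_dP_parallel _ _ _ _ _ _ _ _ _ _ _ (base_frame s Hs) hP hdP hW).
  apply offset_dq_orth_iff in E as [hQ hH]; [| exact Hs].
  apply (frame_dP_orth_iff _ _ _ _ _ _ _ _ _ _ _ (base_frame s Hs) hP hdP hW); auto.
Qed.

Lemma mannheim_offset_conical_equation :
  mannheim_offset_on a0 b0 q qs -> forall s, inI a0 b0 s -> conical_equation s1 kappa Rc s.
Proof.
  intros (sg & Hsg & Hm) s Hs. apply offset_dq_orth_iff; [exact Hs |].
  destruct (base_frame s Hs) as (_ & _ & AA & _ & QA & HA).
  assert (sg0 : sg <> 0) by (intros h; destruct Hsg; lra).
  assert (orth : forall w, lip (avec q s) w = 0 -> lip (dV qs s) w = 0).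
  { intros w hw. rewrite <- (Hm s Hs) in hw, AA.
    assert (E : lip (dV (fun t => vscal sg (qs t)) s) w = 0)
      by (apply lip_dV_eq0_of_hvec; [rewrite AA; lra | exact hw]).
    rewrite dV_cscal, lip_scall in E.
    destruct (Rmult_integral _ _ E); [contradiction | assumption]. }
  split; apply orth; rewrite lip_comm; assumption.
Qed.

Lemma offset_hvec_eq_avec sg s : inI a0 b0 s -> conical_equation s1 kappa Rc s ->
  0 < sg * (Rc * al s) -> hvec (fun t => vscal sg (qs t)) s = avec q s.
Proof.
  intros Hs E pos.
  pose proof (offset_dq_along_avec s Hs E) as D.
  pose proof (striction_speed_neq0 s Hs) as al0.
  pose proof (offset_dq_timelike s Hs) as tl. unfold timelike in tl.
  destruct (base_frame s Hs) as (_ & _ & AA & _).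
  set (NK := lnorm (dV q s) * kappa s).
  replace (Rc * lnorm (dV q s) ^ 2 * kappa s ^ 2) with (Rc * NK ^ 2) in D by (unfold NK; ring).
  assert (NK0 : NK <> 0).
  { intros h. rewrite h in D.
    assert (Z : lip (vscal (al s) (dV qs s)) (vscal (al s) (dV qs s)) = 0)
      by (rewrite D, !lip_scall, !lip_scalr; ring).
    rewrite lip_scall, lip_scalr in Z.
    pose proof (Rsqr_pos_lt _ al0). unfold Rsqr in *. nra. }
  apply (hvec_eq_of_dV _ _ (sg * (Rc * al s) * (NK / al s) ^ 2)); [| exact AA |].
  - apply Rmult_lt_0_compat; [exact pos |].
    apply pow2_gt_0. unfold Rdiv. apply Rmult_integral_contrapositive.
    split; [exact NK0 | apply Rinv_neq_0_compat, al0].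
  - assert (DQ : dV qs s = vscal (/ al s) (vscal (al s) (dV qs s)))
      by (apply V3_ext; simpl; field; exact al0).
    rewrite dV_cscal, DQ, D. destruct (avec q s).
    apply V3_ext; simpl; field; exact al0.
Qed.

Lemma conical_equation_mannheim_offset :
  (forall s, inI a0 b0 s -> conical_equation s1 kappa Rc s) -> mannheim_offset_on a0 b0 q qs.
Proof.
  intros E.
  destruct (classic (exists s0, inI a0 b0 s0)) as [[s0 Hs0] | empty].
  2: { exists 1. split; [left; reflexivity |]. intros s Hs. exfalso. eauto. }
  set (sg := if Rlt_dec 0 (Rc * al s0) then 1 else -1).
  assert (sg0 : sg = 1 \/ sg = -1) by (unfold sg; destruct Rlt_dec; auto).
  exists sg. split; [exact sg0 |].
  assert (pos : forall s, inI a0 b0 s -> 0 < sg * (Rc * al s)).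
  { apply (inI_sign_const a0 b0 (fun t => sg * (Rc * al t)) s0); [| | exact Hs0 |].
    - intros t Ht. apply continuity_pt_filterlim.
      apply (ex_derive_continuous (fun u => sg * (Rc * al u))).
      apply ex_derive_scal, ex_derive_scal, ex_derive_striction_speed, Ht.
    - intros t Ht. pose proof (striction_speed_neq0 t Ht).
      apply Rmult_integral_contrapositive. split; [lra |].
      apply Rmult_integral_contrapositive. split; assumption.
    - pose proof (striction_speed_neq0 s0 Hs0).
      assert (Rc * al s0 <> 0) by (apply Rmult_integral_contrapositive; split; assumption).
      unfold sg. destruct Rlt_dec; lra. }
  intros s Hs. apply offset_hvec_eq_avec; auto.
Qed.

End Offset.

End BaseSurface.

Theorem theorem6p2
  (a0 b0 : Rbar) (c q : R -> V3) (s1 kappa : R -> R) (Rc : R) (qs : R -> V3) :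
  Rc <> 0 ->
  (forall s, inI a0 b0 s ->
     ruled_surface_at c q s /\ arclength_at c s /\
     dV c s = q s /\
     diffV (dV q) s /\
     typeM1p q s /\
     distribution_parameter c q s = 0 /\
     conical_data_at q s1 kappa s /\
     ex_derive kappa s) ->
  (forall s, inI a0 b0 s ->
     ruled_surface_at (fun t => vadd (c t) (vscal Rc (avec q t))) qs s /\
     typeM2p qs s /\
     distribution_parameter (fun t => vadd (c t) (vscal Rc (avec q t))) qs s = 0) ->
  (mannheim_offset_on a0 b0 q qs <->
   forall s, inI a0 b0 s ->
     Derive kappa s =
       - (/ Rc) * (Rc ^ 2 * (kappa s) ^ 2 * (Derive s1 s) ^ 2 + 1)
       - (/ Derive s1 s) * Derive (Derive s1) s * kappa s).
Proof.
  intros Rc0 base offset. split.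
  - exact (mannheim_offset_conical_equation _ _ _ _ _ _ _ base _ Rc0 offset).
  - exact (conical_equation_mannheim_offset _ _ _ _ _ _ _ base _ Rc0 offset).
Qed.
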